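(* Let $(E,C)$ be a finite bipartite separated graph and let $A_{\mathrm{DE}}\subseteq E^1\cup(E^1)^{-1}$ be the set of dead ends. Then, for $v\in E^0$, the clopen set $\Omega(E,C)_v$ contains an isolated point if and only if $v\in V(A_{\mathrm{DE}})$. Consequently $\Omega(E,C)$ is a Cantor space if and only if $V(A_{\mathrm{DE}})=\emptyset$.
   Context: Separated graph $(E,C)$: $E=(E^0,E^1,r,s)$, $C=\bigsqcup_vC_v$ with $C_v$ a partition of $r^{-1}(v)$ into non-empty sets; $X_e$ is the element of $C$ containing $e$. Finite bipartite: $E$ finite, $E^0=E^{0,0}\sqcup E^{0,1}$, $s(E^1)=E^{0,1}$, $r(E^1)=E^{0,0}$. Admissible paths: words $\sigma_m\cdots\sigma_1$ in $E^1\sqcup(E^1)^{-1}$ forming a path in the double graph (where $e^{-1}$ goes from $r(e)$ to $s(e)$; paths are read right to left) such that no subword $ef^{-1}$ has $e=f$ and no subword $e^{-1}f$ has $X_e=X_f$; vertices are the trivial admissible paths. Range and source of a path are taken in the double graph. A choice path is an admissible path $\alpha=e\beta$ with $e\in E^1$ such that there exists $X\in C_{r(e)}$, $X\ne X_e$, with $|X|\ge2$. An element $\sigma\in E^1\cup(E^1)^{-1}$ is a dead end if no choice path has $\sigma$ as its initial (rightmost) letter. A set $A\subseteq E^1\cup(E^1)^{-1}$ is path closed if for every admissible path $\alpha$ whose initial letter lies in $A$, its terminal (leftmost) letter lies in $A$. $A$ is $\partial$-closed if: (1) whenever $v\in E^{0,1}$, $|s^{-1}(v)|\ge2$, $e\in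 s^{-1}(v)$ and $s^{-1}(v)\setminus\{e\}\subseteq A$, then $e^{-1}\in A$; (2) whenever $v\in E^{0,0}$, $|C_v|\ge2$, $X\in C_v$ and $Y^{-1}\cap A\ne\emptyset$ for every $Y\in C_v\setminus\{X\}$, then $X\subseteq A$. $\overline A$ is the smallest $\partial$-closed set containing $A$, and $V(A)=\{v\in E^{0,0}:X^{-1}\cap\overline A\ne\emptyset\ \forall X\in C_v\}\cup\{v\in E^{0,1}:s^{-1}(v)\subseteq\overline A\}$. Configuration space: $\mathbb F$ = free group on $E^1$; $\Omega(E,C)$ = set of $\xi\subseteq\mathbb F$ with $1\in\xi$, right-convex (if a reduced word $e_m^{\varepsilon_m}\cdots e_1^{\varepsilon_1}\in\xi$ then $e_k^{\varepsilon_k}\cdots e_1^{\varepsilon_1}\in\xi$ for $k<m$), and such that for every $\alpha\in\xi$ the set $\xi_\alpha=\{\sigma\in E^1\sqcup(E^1)^{-1}:\sigma\alpha\in\xi\}$ equals $s^{-1}(v)$ for some $v\in E^{0,1}$ or $\{e_X^{-1}:X\in C_v\}$ for some $v\in E^{0,0}$ and $e_X\in X$; topology from $\{0,1\}^{\mathbb F}$. For $v\in E^{0,1}$, $\Omega(E,C)_v=\{\xi:e\in\xi\}$ for any $e\in s^{-1}(v)$; for $v\in E^{0,0}$, $\Omega(E,C)_v=\{\xi:e^{-1}\in\xi\text{ for some }e\in X\}$ for any $X\in C_v$. *)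

From HB Require Import structures.
From mathcomp Require Import all_boot.
Set Implicit Arguments. Unset Strict Implicit. Unset Printing Implicit Defensive.

(* A finite bipartite separated graph (E,C).
   - vertices [vtx] and edges [edg] are finite types;
   - [part v = true] means v \in E^{0,1}, [part v = false] means v \in E^{0,0};
   - s(E^1) \subseteq E^{0,1}, r(E^1) \subseteq E^{0,0};
   - the partition C is encoded by a class label [cls : edg -> lbl]:
     X_e = [set f | cls f = cls e]; edges in one class share their range,
     so C_v = { X_e | r e = v } is a partition of r^{-1}(v) into non-empty sets. *)
Record bsg := BSG {
  vtx : finType;
  edg : finType;
  lbl : finType;
  part : vtx -> bool;
  src : edg -> vtx;
  rng : edg -> vtx;
  cls : edg -> lbl;
  src_part : forall e, part (src e) = true;
  rng_part : forall e, part (rng e) = false;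
  cls_rng : forall e f, cls e = cls f -> rng e = rng f
}.

Section SepGraph.
Variable G : bsg.

(* letters of E^1 \sqcup (E^1)^{-1}: (e,false) = e, (e,true) = e^{-1} *)
Definition letter : finType := (edg G * bool)%type.

Definition linv (a : letter) : letter := (a.1, ~~ a.2).

Definition lsrc (a : letter) : vtx G := if a.2 then rng a.1 else src a.1.
Definition ltgt (a : letter) : vtx G := if a.2 then src a.1 else rng a.1.

(* Words sigma_m ... sigma_1 are represented by the list [:: sigma_1; ...; sigma_m]
   (head = initial/rightmost letter, last = terminal/leftmost letter). *)

(* consecutive letters a = sigma_i, b = sigma_(i+1) of an admissible path *)
Definition adm_step (a b : letter) : bool :=
  [&& ltgt a == lsrc b,
      ~~ [&& ~~ b.2, a.2 & b.1 == a.1]             (* no subword e f^{-1}, e = f *)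
    & ~~ [&& b.2, ~~ a.2 & cls b.1 == cls a.1]].    (* no subword e^{-1} f, X_e = X_f *)

Definition admissible (w : seq letter) : bool := (w != [::]) && sorted adm_step w.

(* choice path: alpha = e beta, e \in E^1, with some X \in C_{r(e)}, X <> X_e, |X| >= 2 *)
Definition choice_path (w : seq letter) : Prop :=
  exists x0 : letter,
    admissible w /\ (last x0 w).2 = false /\
    exists f g : edg G, rng f = rng (last x0 w).1 /\ cls f <> cls (last x0 w).1 /\
                        cls g = cls f /\ g <> f.

Definition dead_end (a : letter) : Prop := ~ exists w, choice_path (a :: w).

Definition dclosed (B : letter -> Prop) : Prop :=
  (forall (v : vtx G) (e : edg G),
      part v = true -> src e = v ->
      (exists e', src e' = v /\ e' <> e) ->                      (* |s^{-1}(v)| >= 2 *)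
      (forall e', src e' = v -> e' <> e -> B (e', false)) ->
      B (e, true)) /\
  (forall (v : vtx G) (e : edg G),
      part v = false -> rng e = v ->                              (* X = X_e \in C_v *)
      (exists f, rng f = v /\ cls f <> cls e) ->                  (* |C_v| >= 2 *)
      (forall f, rng f = v -> cls f <> cls e ->
         exists g, cls g = cls f /\ B (g, true)) ->                (* Y^{-1} \cap B <> \emptyset *)
      forall g, cls g = cls e -> B (g, false)).                   (* X \subseteq B *)

Definition dclosure (A : letter -> Prop) (a : letter) : Prop :=
  forall B : letter -> Prop, (forall b, A b -> B b) -> dclosed B -> B a.

Definition Vset (A : letter -> Prop) (v : vtx G) : Prop :=
  (part v = false /\
     forall e, rng e = v -> exists g, cls g = cls e /\ dclosure A (g, true)) \/
  (part v = true /\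
     forall e, src e = v -> dclosure A (e, false)).

(* free group on E^1: reduced words *)
Definition reduced (w : seq letter) : bool := sorted (fun a b => b != linv a) w.

(* left multiplication sigma * alpha in the free group (alpha reduced) *)
Definition lmul (a : letter) (w : seq letter) : seq letter :=
  if last a w == linv a then take (size w).-1 w else rcons w a.

(* configuration space Omega(E,C): subsets of F given as predicates on reduced words *)
Definition config (xi : seq letter -> Prop) : Prop :=
  (forall w, xi w -> reduced w) /\
  xi [::] /\
  (forall w k, xi w -> xi (take k w)) /\
  (forall alpha, xi alpha ->
     (exists v, part v = true /\
        forall a, xi (lmul a alpha) <-> (a.2 = false /\ src a.1 = v)) \/
     (exists v, part v = false /\
        (forall a, xi (lmul a alpha) -> a.2 = true /\ rng a.1 = v) /\
        (forall e, rng e = v ->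
           exists g, (cls g = cls e /\ xi (lmul (g, true) alpha)) /\
             forall g', cls g' = cls e -> xi (lmul (g', true) alpha) -> g' = g))).

Definition config_v (v : vtx G) (xi : seq letter -> Prop) : Prop :=
  if part v then exists e, src e = v /\ xi [:: (e, false)]
  else exists e, rng e = v /\ exists f, cls f = cls e /\ xi [:: (f, true)].

Definition agree (F : seq (seq letter)) (xi eta : seq letter -> Prop) : Prop :=
  forall w, w \in F -> (xi w <-> eta w).

(* xi is an isolated point of Omega(E,C) (product topology on {0,1}^F):
   some basic (cylinder) neighbourhood meets Omega only in xi *)
Definition isolated (xi : seq letter -> Prop) : Prop :=
  exists F : seq (seq letter),
    forall eta, config eta -> agree F eta xi -> forall w, eta w <-> xi w.

End SepGraph.

(* A subspace S of {0,1}^T (product topology) is a Cantor space: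
   it is homeomorphic to {0,1}^N. Points of {0,1}^T are predicates on T
   (identified extensionally). *)
Definition cantor_space (T : eqType) (S : (T -> Prop) -> Prop) : Prop :=
  exists (f : (T -> Prop) -> (nat -> bool)) (g : (nat -> bool) -> (T -> Prop)),
    (forall x, S (g x)) /\
    (forall xi, S xi -> forall t, g (f xi) t <-> xi t) /\
    (forall x n, f (g x) n = x n) /\
    (* f continuous on S *)
    (forall xi, S xi -> forall n, exists F : seq T,
        forall eta, S eta -> (forall t, t \in F -> (eta t <-> xi t)) -> f eta n = f xi n) /\
    (* g continuous *)
    (forall x t, exists N, forall y, (forall i, i < N -> y i = x i) -> (g y t <-> g x t)).

(* A configuration is a tree of reduced words, determined by its root and by
   the representative it selects, at each node, in every class it has to
   enter.  Changing that selection at a node whose class has two edges (a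
   choice node) changes the configuration only above the node, so if [xi] is
   isolated by finitely many coordinates, all its choice nodes lie inside that
   finite window.  Beyond the window no admissible path reaches a choice
   letter, so the letters there are dead ends; an induction towards the root
   (on the number of choice nodes above a node, then its depth) puts every
   letter of [xi] in the boundary closure of the dead ends, which at the root
   says [v \in V(A_DE)].  Conversely, for [v \in V(A_DE)] select in every class
   a representative of least stage in that closure: by induction on the stage,
   only finitely many admissible paths of the resulting configuration reach a
   choice letter, so it is determined by finitely many coordinates.
   Finally, [Omega(E,C)] is a closed non-empty subset of [{0,1}^F] with [F]
   countable, and such a set is a Cantor space exactly when it has no
   isolated point; the homeomorphism with [{0,1}^N] reads the bits of a point
   at the levels where the tree of its prefixes splits. *)

From Stdlib Require Import ClassicalEpsilon.
From mathcomp Require Import all_boot boolp zify.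
Set Implicit Arguments. Unset Strict Implicit. Unset Printing Implicit Defensive.

Lemma ex_least_nat (Q : nat -> Prop) :
  (exists n, Q n) -> exists2 m, Q m & forall n, Q n -> m <= n.
Proof.
case=> n Qn; have exQ : exists n, `[< Q n >] by exists n; apply/asboolP.
by case: (ex_minnP exQ) => m /asboolP Qm min_m; exists m => // k /asboolP /min_m.
Qed.

Lemma mkseq_eq_prefix T (x y : nat -> T) n :
  (forall i, i < n -> x i = y i) -> mkseq x n = mkseq y n.
Proof. by move=> xy; apply/eq_in_map => i; rewrite mem_iota add0n => /xy. Qed.

(** * Perfect subsets of Cantor space *)

Section PerfectCantor.
Variable P : (nat -> bool) -> Prop.
Hypothesis P_closed :
  forall x, (forall N, exists y, P y /\ forall i, i < N -> y i = x i) -> P x.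
Hypothesis P_nonempty : exists x, P x.
Hypothesis P_perfect : forall x, P x -> forall N, exists y, P y /\
   (forall i, i < N -> y i = x i) /\ exists i, y i != x i.

Definition extendable (s : seq bool) :=
  exists z, P z /\ forall i, i < size s -> z i = nth false s i.
Definition splits s := extendable (rcons s true) /\ extendable (rcons s false).

(* [embed y] walks down the tree of prefixes of points of [P], reading the
   next bit of [y] at every splitting node; the counter records how many
   bits of [y] have been used. *)
Definition embed_step (y : nat -> bool) (p : seq bool * nat) : seq bool * nat :=
  if `[< splits p.1 >] then (rcons p.1 (y p.2), p.2.+1)
  else (rcons p.1 `[< extendable (rcons p.1 true) >], p.2).
Definition embed_prefix y n := iter n (embed_step y) ([::], 0).
Definition embed y n := nth false (embed_prefix y n.+1).1 n.

Definition next_split_spec x n m :=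
  n <= m /\ splits (mkseq x m) /\ forall j, n <= j -> j < m -> ~ splits (mkseq x j).
Definition next_split x n := epsilon (inhabits 0) (next_split_spec x n).
Fixpoint split_pos x k :=
  if k is k.+1 then next_split x (split_pos x k).+1 else next_split x 0.
Definition split_bits x k := x (split_pos x k).

Lemma embed_prefix_size y n :
  size (embed_prefix y n).1 = n /\ (embed_prefix y n).2 <= n.
Proof.
elim: n => //= n [size_n used_n]; rewrite /embed_step.
by case: asboolP => _ /=; rewrite size_rcons size_n // (leq_trans used_n).
Qed.

Lemma embed_prefixS y n :
  exists b, embed_prefix y n.+1 = (rcons (embed_prefix y n).1 b, (embed_prefix y n.+1).2).
Proof. rewrite /= /embed_step; case: asboolP => _ /=; eexists; reflexivity. Qed.

Lemma nth_embed_prefix y i n m : i < n -> n <= m ->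
  nth false (embed_prefix y m).1 i = nth false (embed_prefix y n).1 i.
Proof.
move=> lt_in; elim: m => [|m IH]; first by rewrite leqn0 => /eqP ->.
rewrite leq_eqVlt => /orP [/eqP -> //|lt_nm].
have [b ->] := embed_prefixS y m; rewrite /= nth_rcons (embed_prefix_size y m).1.
by rewrite (leq_trans lt_in lt_nm) IH.
Qed.

Lemma mkseq_embed y n : mkseq (embed y) n = (embed_prefix y n).1.
Proof.
apply: (@eq_from_nth _ false); first by rewrite size_mkseq (embed_prefix_size y n).1.
move=> i; rewrite size_mkseq => lt_in; rewrite nth_mkseq //.
by rewrite /embed (nth_embed_prefix y (ltnSn i) lt_in).
Qed.

Lemma extendable_rcons s :
  extendable s -> extendable (rcons s true) \/ extendable (rcons s false).
Proof.
case=> z [Pz zs]; case Ez: (z (size s)); [left|right]; exists z; split=> // i;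
  rewrite size_rcons ltnS leq_eqVlt nth_rcons => /orP [/eqP ->|lt_is];
  by rewrite ?ltnn ?eqxx ?Ez ?lt_is ?zs.
Qed.

Lemma extendable_mkseq z n : P z -> extendable (mkseq z n).
Proof. by move=> Pz; exists z; split=> // i; rewrite size_mkseq => lt_in; rewrite nth_mkseq. Qed.

Lemma extendable_mkseqS z m : P z -> extendable (rcons (mkseq z m) (z m)).
Proof. by rewrite -mkseqS; apply: extendable_mkseq. Qed.

Lemma extendable_embed_prefix y n : extendable (embed_prefix y n).1.
Proof.
elim: n => [|n IH]; first by case: P_nonempty => z Pz; exists z.
rewrite /= /embed_step; case: asboolP => [[ext1 ext0]|_] /=; first by case: (y _).
by case: asboolP => // ext1; case: (extendable_rcons IH).
Qed.

Lemma embed_in_P y : P (embed y).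
Proof.
apply: P_closed => N; have [z [Pz zN]] := extendable_embed_prefix y N.
exists z; split=> // i lt_iN.
by rewrite zN ?(embed_prefix_size y N).1 // -mkseq_embed nth_mkseq.
Qed.

Lemma embed_prefix_agree y z n :
  (forall i, i < n -> y i = z i) -> embed_prefix y n = embed_prefix z n.
Proof.
elim: n => [//|n IH] yz; rewrite /= IH => [|i lt_in]; last exact/yz/ltnW.
rewrite /embed_step; case: asboolP => // _; rewrite yz //.
exact: leq_ltn_trans (embed_prefix_size z n).2 _.
Qed.

Lemma embed_continuous y z t :
  (forall i, i < t.+1 -> z i = y i) -> embed z t = embed y t.
Proof. by move=> zy; rewrite /embed (embed_prefix_agree zy). Qed.

Lemma next_split_spec_uniq x n m1 m2 :
  next_split_spec x n m1 -> next_split_spec x n m2 -> m1 = m2.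
Proof.
move=> [le1 [split1 min1]] [le2 [split2 min2]]; apply/eqP; rewrite eqn_leq.
by apply/andP; split; rewrite leqNgt; apply/negP => lt12; [apply: (min1 m2)|apply: (min2 m1)].
Qed.

Lemma next_splitE x n m : next_split_spec x n m -> next_split x n = m.
Proof.
move=> spec_m; apply: (next_split_spec_uniq _ spec_m); rewrite /next_split.
by apply: epsilon_spec; exists m.
Qed.

Section SplitPositions.
Variable x : nat -> bool.
Hypothesis Px : P x.

Lemma split_after n : exists m, n <= m /\ splits (mkseq x m).
Proof.
have [y [Py [yx [i yxi]]]] := P_perfect Px n.
have [m neq_m min_m] := ex_least_nat (ex_intro (fun i => y i != x i) i yxi).
have eq_lt_m j : j < m -> y j = x j.
  by move=> lt_jm; apply/eqP/negP => /negP /min_m; rewrite leqNgt lt_jm.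
exists m; split.
  by rewrite leqNgt; apply/negP => lt_mn; move: neq_m; rewrite yx ?eqxx.
have ext_x := extendable_mkseqS m Px; have := extendable_mkseqS m Py.
rewrite (mkseq_eq_prefix eq_lt_m); move: neq_m ext_x.
by case: (x m); case: (y m) => // _ ? ?; split.
Qed.

Lemma next_split_specP n : next_split_spec x n (next_split x n).
Proof.
rewrite /next_split; apply: epsilon_spec.
have [m [le_nm split_m]] := split_after n.
have [k [le_nk split_k] min_k] :=
  ex_least_nat (ex_intro (fun k => n <= k /\ splits (mkseq x k)) m (conj le_nm split_m)).
exists k; do 2 split=> //; move=> j le_nj lt_jk split_j.
by have := min_k j (conj le_nj split_j); rewrite leqNgt lt_jk.
Qed.

Lemma split_pos_splits k : splits (mkseq x (split_pos x k)).
Proof.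
by case: k => [|k] /=; [case: (next_split_specP 0)|case: (next_split_specP (split_pos x k).+1)] => _ [].
Qed.

Lemma split_pos_ltS k : split_pos x k < split_pos x k.+1.
Proof. by case: (next_split_specP (split_pos x k).+1). Qed.

Lemma split_pos_lt k l : k < l -> split_pos x k < split_pos x l.
Proof.
elim: l => // l IH; rewrite ltnS leq_eqVlt => /orP [/eqP ->|lt_kl]; first exact: split_pos_ltS.
exact: ltn_trans (IH lt_kl) (split_pos_ltS l).
Qed.

Lemma split_pos_inj : injective (split_pos x).
Proof. by move=> k l E; case: (ltngtP k l) => // /split_pos_lt; rewrite E ltnn. Qed.

Lemma leq_split_pos k : k <= split_pos x k.
Proof. by elim: k => // k IH; exact: leq_ltn_trans IH (split_pos_ltS k). Qed.

Lemma splits_split_pos n : splits (mkseq x n) -> exists k, split_pos x k = n.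
Proof.
move=> split_n.
have [k le_nk min_k] := ex_least_nat (ex_intro (fun k => n <= split_pos x k) n (leq_split_pos n)).
exists k; apply/eqP; rewrite eqn_leq le_nk andbT leqNgt; apply/negP => lt_kn.
case: k le_nk min_k lt_kn => [|k] le_nk min_k lt_kn /=.
  by case: (next_split_specP 0) => _ [_ /(_ n)]; apply.
case: (next_split_specP (split_pos x k).+1) => _ [_ /(_ n)]; apply=> //.
by rewrite ltnNge; apply/negP => /min_k; rewrite ltnn.
Qed.

(* Counting the splitting positions below [n]: the invariant relating the
   counter of [embed_step] to [split_pos]. *)
Lemma split_count_step c n : (forall k, k < c <-> split_pos x k < n) ->
  (splits (mkseq x n) -> split_pos x c = n /\ forall k, k < c.+1 <-> split_pos x k < n.+1) /\
  (~ splits (mkseq x n) -> forall k, k < c <-> split_pos x k < n.+1).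
Proof.
move=> count_c; split=> [split_n|nsplit_n k].
  have [k0 Ek0] := splits_split_pos split_n.
  have Ec : c = k0.
    apply/eqP; rewrite eqn_leq; apply/andP; split.
      by rewrite leqNgt; apply/negP => /count_c; rewrite Ek0 ltnn.
    by case: k0 Ek0 => // k0 Ek0; apply/count_c; rewrite -Ek0 split_pos_ltS.
  subst c; split=> // k; rewrite !ltnS [k <= k0]leq_eqVlt [split_pos x k <= n]leq_eqVlt.
  split=> /orP [/eqP E|lt_k]; rewrite ?E ?Ek0 ?eqxx //.
  - by move/count_c: lt_k => ->; rewrite orbT.
  - by rewrite (split_pos_inj (etrans E (esym Ek0))) eqxx.
  - by move/count_c: lt_k => ->; rewrite orbT.
rewrite ltnS [split_pos x k <= n]leq_eqVlt; split=> [/count_c ->|]; first by rewrite orbT.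
case/orP => [/eqP E|/count_c //]; exfalso; apply: nsplit_n; rewrite -E; exact: split_pos_splits.
Qed.

Lemma split_bitsK n : embed (split_bits x) n = x n.
Proof.
have inv m : (embed_prefix (split_bits x) m).1 = mkseq x m /\
    forall k, k < (embed_prefix (split_bits x) m).2 <-> split_pos x k < m.
  elim: m => [|m [pref_m count_m]] /=; first by split=> // k; rewrite ltn0.
  have [count_split count_nsplit] := split_count_step count_m.
  rewrite /embed_step pref_m mkseqS; case: asboolP => [split_m|nsplit_m] /=.
    by have [E1 E2] := count_split split_m; rewrite /split_bits E1.
  split; last exact: count_nsplit; congr rcons.
  have := extendable_mkseqS m Px; case: (x m) => ext_m; first exact/asboolP.
  by apply/asboolP => ext1; apply: nsplit_m.
by rewrite /embed (inv n.+1).1 nth_mkseq.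
Qed.

Lemma split_bits_continuous k y : P y ->
  (forall i, i < (split_pos x k).+1 -> y i = x i) -> split_bits y k = split_bits x k.
Proof.
move=> Py yx; suff E j : j <= k -> split_pos y j = split_pos x j.
  by rewrite /split_bits E // yx.
have split_iff m : m <= split_pos x k -> (splits (mkseq y m) <-> splits (mkseq x m)).
  move=> le_m; rewrite (@mkseq_eq_prefix _ y x m) // => i lt_im.
  by apply/yx; rewrite ltnS ltnW // (leq_trans lt_im le_m).
have le_pos l : l <= k -> split_pos x l <= split_pos x k.
  by rewrite leq_eqVlt => /orP [/eqP ->//|/split_pos_lt/ltnW].
have next_split_eq n l : l <= k -> next_split x n = split_pos x l ->
    next_split y n = split_pos x l.
  move=> le_lk E; apply: next_splitE.
  case: (next_split_specP n); rewrite E => le [split_m min_m]; do 2 split=> //.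
    exact/(split_iff _ (le_pos _ le_lk)).
  move=> j' ? lt_j'; rewrite split_iff; first exact: min_m.
  exact: ltnW (leq_trans lt_j' (le_pos _ le_lk)).
elim: j => [|j IH] le_jk; first exact: (next_split_eq 0 0).
by rewrite /= IH ?(ltnW le_jk) //; apply: (next_split_eq _ j.+1).
Qed.
End SplitPositions.

Lemma embedK y k : split_bits (embed y) k = y k.
Proof.
pose x := embed y; have Px : P x := embed_in_P y.
have count n j : j < (embed_prefix y n).2 <-> split_pos x j < n.
  elim: n j => [|m IH] j /=; first by rewrite ltn0.
  have [count_split count_nsplit] := split_count_step Px IH.
  rewrite /embed_step -mkseq_embed; case: asboolP => [split_m|nsplit_m] /=.
    exact: (count_split split_m).2.
  exact: count_nsplit.
pose n := split_pos x k.
have [count_split _] := split_count_step Px (count n).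
have [E1 _] := count_split (split_pos_splits Px k).
have Ek : (embed_prefix y n).2 = k by apply: (split_pos_inj Px); rewrite E1.
rewrite /split_bits -/n /x /embed /= /embed_step.
have -> : `[< splits (embed_prefix y n).1 >].
  by apply/asboolP; rewrite -mkseq_embed; apply: split_pos_splits.
by rewrite /= nth_rcons (embed_prefix_size y n).1 ltnn eqxx Ek.
Qed.
End PerfectCantor.

Section CountableIndex.
Variable T : countType.
Variable S : (T -> Prop) -> Prop.
Hypothesis S_ext : forall xi eta, (forall t, xi t <-> eta t) -> S xi -> S eta.
Hypothesis S_closed : forall xi,
  (forall F : seq T, exists eta, S eta /\ forall t, t \in F -> (eta t <-> xi t)) -> S xi.
Hypothesis S_nonempty : exists xi, S xi.
Hypothesis S_perfect : forall xi, S xi -> forall F : seq T, exists eta, S eta /\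
  (forall t, t \in F -> (eta t <-> xi t)) /\ exists t, ~ (eta t <-> xi t).

Definition encode (xi : T -> Prop) (n : nat) : bool :=
  if pickle_inv n is Some t then `[< xi t >] else false.
Definition decode (x : nat -> bool) (t : T) : Prop := x (pickle t).
Definition encoded x := S (decode x) /\ forall n, @pickle_inv T n = None -> x n = false.

Lemma decode_encode xi t : decode (encode xi) t <-> xi t.
Proof. by rewrite /decode /encode pickleK_inv asboolE. Qed.

Lemma encode_decode x n : encoded x -> encode (decode x) n = x n.
Proof.
case=> _ x0; rewrite /encode; case E: (pickle_inv n) => [t|]; last by rewrite x0.
by have := @pickle_invK T n; rewrite E /= => <-; rewrite /decode asboolb.
Qed.

Lemma encoded_encode xi : S xi -> encoded (encode xi).
Proof.
move=> Sxi; split; last by move=> n; rewrite /encode => ->.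
by apply: (S_ext _ Sxi) => t; rewrite decode_encode.
Qed.

Lemma encode_agree xi eta N :
  (forall t, t \in pmap (@pickle_inv T) (iota 0 N) -> (eta t <-> xi t)) ->
  forall i, i < N -> encode eta i = encode xi i.
Proof.
move=> agr i lt_iN; rewrite /encode; case E: (pickle_inv i) => [u|] //.
have u_window : u \in pmap (@pickle_inv T) (iota 0 N).
  by rewrite mem_pmap; apply/mapP; exists i; rewrite ?mem_iota ?E.
exact/asbool_equiv_eq/agr.
Qed.

Lemma encoded_closed x :
  (forall N, exists y, encoded y /\ forall i, i < N -> y i = x i) -> encoded x.
Proof.
move=> approx; split=> [|n En]; last first.
  by have [y [[_ y0] yx]] := approx n.+1; rewrite -yx // y0.
apply: S_closed => F; have [y [[Sy _] yx]] := approx (\max_(t <- F) pickle t).+1.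
exists (decode y); split=> // t tF; rewrite /decode yx // ltnS.
by rewrite (big_rem t tF) /= leq_maxl.
Qed.

Lemma encoded_nonempty : exists x, encoded x.
Proof. by case: S_nonempty => xi Sxi; exists (encode xi); apply: encoded_encode. Qed.

Lemma encoded_perfect x : encoded x -> forall N, exists y, encoded y /\
   (forall i, i < N -> y i = x i) /\ exists i, y i != x i.
Proof.
move=> enc_x N; have [Sx _] := enc_x.
have [eta [Seta [agr [t Ht]]]] := S_perfect Sx (pmap (@pickle_inv T) (iota 0 N)).
exists (encode eta); split; first exact: encoded_encode.
split=> [i lt_iN|].
  rewrite -(encode_decode i enc_x); apply: encode_agree lt_iN => u /agr.
  by rewrite /decode.
exists (pickle t); rewrite /encode pickleK_inv; apply/negP => /eqP E; apply: Ht.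
by rewrite /decode -E; split => [/asboolP|?]; last apply/asboolP.
Qed.

Lemma cantor_of_perfect : cantor_space S.
Proof.
have enc_embed y : encoded (embed encoded y).
  by apply: embed_in_P; [exact: encoded_closed|exact: encoded_nonempty].
exists (fun xi => split_bits encoded (encode xi)), (fun x => decode (embed encoded x)).
split; first by move=> x; case: (enc_embed x).
split.
  move=> xi Sxi t; rewrite /decode split_bitsK; first exact: decode_encode.
    exact: encoded_perfect.
  exact: encoded_encode.
split.
  move=> x n; rewrite (_ : encode _ = embed encoded x); last by apply/funext => m; apply: encode_decode.
  by apply: embedK; [exact: encoded_closed|exact: encoded_nonempty|exact: encoded_perfect].
split.
  move=> xi Sxi n.
  exists (pmap (@pickle_inv T) (iota 0 (split_pos encoded (encode xi) n).+1)) => eta Seta agr.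
  apply: split_bits_continuous; [exact: encoded_perfect|exact: encoded_encode|exact: encoded_encode|].
  exact: encode_agree.
move=> x t; exists (pickle t).+1 => y yx.
by rewrite /decode (@embed_continuous encoded x y (pickle t) yx).
Qed.
End CountableIndex.

(** * Configurations as generated trees *)

Lemma take_rcons T (s : seq T) x k :
  take k (rcons s x) = if k <= size s then take k s else rcons s x.
Proof.
rewrite -cats1 take_cat; case: (ltngtP k (size s)) => [//|lt_sk|->].
  have : 0 < k - size s by rewrite subn_gt0.
  by case: (k - size s).
by rewrite subnn take0 cats0 take_size.
Qed.

Lemma prefix_rconsW (T : eqType) (p s : seq T) x : prefix p s -> prefix p (rcons s x).
Proof. by move/prefix_trans; apply; apply: prefix_rcons. Qed.

Lemma prefix_rcons_self (T : eqType) (s : seq T) x : ~~ prefix (rcons s x) s.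
Proof. by apply/negP => /size_prefix; rewrite size_rcons ltnn. Qed.

Lemma prefix_proper (T : eqType) (p s : seq T) :
  prefix p s -> p != s -> exists x, prefix (rcons p x) s.
Proof.
case/prefixP => [[|x s'] ->]; first by rewrite cats0 eqxx.
by exists x; rewrite -cat_rcons prefix_prefix.
Qed.

Lemma ex_uniform_bound (T : eqType) (s : seq T) (P : T -> nat -> Prop) :
  (forall x n m, n <= m -> P x n -> P x m) ->
  (forall x, x \in s -> exists n, P x n) -> exists N, forall x, x \in s -> P x N.
Proof.
move=> P_mono; elim: s => [|y s IH] ex_P; first by exists 0.
have [n Pn] := ex_P y (mem_head _ _).
have [N PN] := IH (fun x xs => ex_P x (@mem_behead _ (y :: s) x xs)).
exists (maxn n N) => x; rewrite inE => /orP [/eqP ->|xs].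
  by apply: P_mono Pn; apply: leq_maxl.
by apply: P_mono (PN x xs); apply: leq_maxr.
Qed.

Lemma ex_uniform_cover (T U : eqType) (s : seq T) (R : T -> U -> Prop) :
  (forall x, x \in s -> exists l : seq U, forall w, R x w -> w \in l) ->
  exists l : seq U, forall x, x \in s -> forall w, R x w -> w \in l.
Proof.
elim: s => [|y s IH] ex_l; first by exists [::].
have [l Rl] := ex_l y (mem_head _ _).
have [l' Rl'] := IH (fun x xs => ex_l x (@mem_behead _ (y :: s) x xs)).
exists (l ++ l') => x; rewrite inE => /orP [/eqP ->|xs] w Rw; rewrite mem_cat.
  by rewrite Rl.
by rewrite (Rl' x xs w Rw) orbT.
Qed.

Lemma ex_uniform_bound_in (T : finType) (Q : T -> Prop) (P : T -> nat -> Prop) :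
  (forall x n m, n <= m -> P x n -> P x m) ->
  (forall x, Q x -> exists n, P x n) -> exists N, forall x, Q x -> P x N.
Proof.
move=> P_mono ex_P; have [|x _|N PN] := @ex_uniform_bound _ (enum T) (fun x n => Q x -> P x n).
- by move=> x n m le_nm Pn /Pn; apply: P_mono.
- case: (pselect (Q x)) => [/ex_P [n Pn]|notQ]; first by exists n.
  by exists 0.
- by exists N => x; apply: PN; rewrite mem_enum.
Qed.

Lemma ex_uniform_cover_in (T : finType) (U : eqType) (Q : T -> Prop) (R : T -> U -> Prop) :
  (forall x, Q x -> exists l : seq U, forall w, R x w -> w \in l) ->
  exists l : seq U, forall x, Q x -> forall w, R x w -> w \in l.
Proof.
move=> ex_l; have [x _|l Rl] := @ex_uniform_cover _ _ (enum T) (fun x w => Q x /\ R x w).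
  case: (pselect (Q x)) => [/ex_l [l Rl]|notQ]; first by exists l => w [_ /Rl].
  by exists [::] => w [].
by exists l => x Qx w Rw; apply: (Rl x); rewrite ?mem_enum.
Qed.

Section Configurations.
Variable G : bsg.
Notation L := (letter G).

Lemma linv_neq (a : L) : linv a != a.
Proof. by case: a => e []; rewrite /linv /= xpair_eqE eqxx. Qed.

Lemma linvK : involutive (@linv G).
Proof. by case=> e b; rewrite /linv /= negbK. Qed.

Lemma lmul_linv (b : seq L) t : lmul (linv t) (rcons b t) = b.
Proof. by rewrite /lmul last_rcons linvK eqxx size_rcons /= -cats1 take_size_cat. Qed.

Lemma lmul_rcons (b : seq L) t a :
  a != linv t -> lmul a (rcons b t) = rcons (rcons b t) a.
Proof.
by move=> ne_a; rewrite /lmul last_rcons; case: eqP => // E; move: ne_a; rewrite E linvK eqxx.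
Qed.

Lemma lmul_nil (a : L) : lmul a [::] = [:: a].
Proof. by rewrite /lmul /= eq_sym (negbTE (linv_neq a)). Qed.

Lemma cls_neq_linv (e f : edg G) : cls e <> cls f -> (e, true) != linv (f, false).
Proof.
by move=> ef; rewrite /linv /= xpair_eqE negb_and; apply/orP; left; apply/eqP => E; apply: ef; rewrite E.
Qed.

Lemma reduced_rcons (b : seq L) t a :
  reduced (rcons (rcons b t) a) = reduced (rcons b t) && (a != linv t).
Proof.
rewrite /reduced; case: b => [|x b]; first by rewrite /= andbT.
by rewrite !rcons_cons /= rcons_path last_rcons.
Qed.

Lemma letterT (a : L) : a.2 = true -> a = (a.1, true).
Proof. by case: a => ? ? /= ->. Qed.

Lemma letterF (a : L) : a.2 = false -> a = (a.1, false).
Proof. by case: a => ? ? /= ->. Qed.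

Section Config.
Variable xi : seq L -> Prop.
Hypothesis xi_config : config xi.

Lemma config_take w k : xi w -> xi (take k w).
Proof. by case: xi_config => _ [_ [take_xi _]] /take_xi. Qed.

Lemma config_prefix p w : xi w -> prefix p w -> xi p.
Proof. by move=> xi_w; rewrite prefixE => /eqP <-; apply: config_take. Qed.

Lemma config_rcons b a : xi (rcons b a) -> xi b.
Proof. by move/config_prefix; apply; apply: prefix_rcons. Qed.

Lemma config_reduced w : xi w -> reduced w.
Proof. by case: xi_config => red_xi _ /red_xi. Qed.

Lemma config_no_backtrack b t : ~ xi (rcons (rcons b t) (linv t)).
Proof. by move/config_reduced; rewrite reduced_rcons eqxx andbF. Qed.

Lemma config_children b t : xi (rcons b t) ->
  (t.2 = true -> forall a, xi (lmul a (rcons b t)) <-> (a.2 = false /\ src a.1 = src t.1)) /\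
  (t.2 = false -> (forall a, xi (lmul a (rcons b t)) -> a.2 = true /\ rng a.1 = rng t.1) /\
     forall e, rng e = rng t.1 -> exists g, (cls g = cls e /\ xi (lmul (g, true) (rcons b t))) /\
       forall g', cls g' = cls e -> xi (lmul (g', true) (rcons b t)) -> g' = g).
Proof.
move=> xi_bt; have xi_b : xi (lmul (linv t) (rcons b t)) by rewrite lmul_linv; apply: config_rcons xi_bt.
case: xi_config => _ [_ [_ local]]; case: (local _ xi_bt) => [[v [_ out]]|[v [_ [in_v reps]]]].
  have [E1 E2] := (out (linv t)).1 xi_b; split.
    by move=> _ a; rewrite out; move: E2; rewrite /linv /= => ->.
  by move=> Ht; move: E1; rewrite /linv /= Ht.
have [E1 E2] := in_v _ xi_b; split; first by move=> Ht; move: E1; rewrite /linv /= Ht.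
by move=> _; move: E2; rewrite /linv /= => ->; split.
Qed.

Definition rooted_at (v : vtx G) : Prop :=
  (part v = true /\ forall a, xi [:: a] <-> (a.2 = false /\ src a.1 = v)) \/
  (part v = false /\ (forall a, xi [:: a] -> a.2 = true /\ rng a.1 = v) /\
     forall e, rng e = v -> exists g, (cls g = cls e /\ xi [:: (g, true)]) /\
       forall g', cls g' = cls e -> xi [:: (g', true)] -> g' = g).

Lemma config_rooted : exists v, rooted_at v.
Proof.
case: xi_config => _ [xi0 [_ local]].
case: (local _ xi0) => [[v [Pv out]]|[v [Pv [in_v reps]]]]; exists v; [left|right].
  by split=> // a; rewrite -out lmul_nil.
split=> //; split; first by move=> a; rewrite -lmul_nil; apply: in_v.
move=> e /reps [g [[Cg xi_g] U]]; exists g; split; first by rewrite -lmul_nil.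
by move=> g' C' X'; apply: U; rewrite ?lmul_nil.
Qed.
End Config.

(* A configuration is a tree of reduced words; it is determined by its root
   [v0] and, at each node, by the representative [sel b g] it picks in each
   class that must be entered from node [b]. *)
Section Generated.
Variable v0 : vtx G.
Variable sel : seq L -> edg G -> Prop.

Definition gen_step (b : seq L) (a : L) : Prop :=
  if nilp b then
    (if part v0 then a.2 = false /\ src a.1 = v0 else a.2 = true /\ rng a.1 = v0 /\ sel [::] a.1)
  else let t := last a b in
    if t.2 then a.2 = false /\ src a.1 = src t.1 /\ a.1 <> t.1
    else a.2 = true /\ rng a.1 = rng t.1 /\ cls a.1 <> cls t.1 /\ sel b a.1.

Definition needs_rep (b : seq L) (g : edg G) : Prop :=
  if nilp b then part v0 = false /\ rng g = v0
  else let t := last (g, true) b in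
    t.2 = false /\ rng g = rng t.1 /\ cls g <> cls t.1.

Inductive generated : seq L -> Prop :=
| generated_nil : generated [::]
| generated_rcons_step b a : generated b -> gen_step b a -> generated (rcons b a).

Definition selects_reps : Prop := forall b g, generated b -> needs_rep b g ->
  exists g', cls g' = cls g /\ sel b g' /\ forall g'', cls g'' = cls g -> sel b g'' -> g'' = g'.

Lemma gen_step_nil a : gen_step [::] a =
  (if part v0 then a.2 = false /\ src a.1 = v0 else a.2 = true /\ rng a.1 = v0 /\ sel [::] a.1).
Proof. by []. Qed.

Lemma gen_step_rcons b t a : gen_step (rcons b t) a =
  if t.2 then a.2 = false /\ src a.1 = src t.1 /\ a.1 <> t.1
  else a.2 = true /\ rng a.1 = rng t.1 /\ cls a.1 <> cls t.1 /\ sel (rcons b t) a.1.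
Proof. by rewrite /gen_step /nilp size_rcons /= last_rcons. Qed.

Lemma needs_rep_nil g : needs_rep [::] g = (part v0 = false /\ rng g = v0).
Proof. by []. Qed.

Lemma needs_rep_rcons b t g :
  needs_rep (rcons b t) g = (t.2 = false /\ rng g = rng t.1 /\ cls g <> cls t.1).
Proof. by rewrite /needs_rep /nilp size_rcons /= last_rcons. Qed.

Lemma generated_rcons b a : generated (rcons b a) <-> generated b /\ gen_step b a.
Proof.
split=> [gen_ba|[]]; last exact: generated_rcons_step.
inversion gen_ba as [E|b' a' gen_b step_a E]; first by move: (congr1 size E); rewrite size_rcons.
by case: (rcons_inj E) => <- <-.
Qed.

Lemma generated1 a : generated [:: a] <-> gen_step [::] a.
Proof.
rewrite -[[:: a]]/(rcons [::] a) generated_rcons.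
by split=> [[]|step_a] //; split=> //; constructor.
Qed.

Lemma generated_take w k : generated w -> generated (take k w).
Proof.
elim=> [|b a gen_b IH step_a]; first by case: k; constructor.
by rewrite take_rcons; case: ifP => // _; apply: generated_rcons_step.
Qed.

Lemma generated_prefix p w : prefix p w -> generated w -> generated p.
Proof. by rewrite prefixE => /eqP <-; apply: generated_take. Qed.

Lemma gen_step_linv b t a : gen_step (rcons b t) a -> a != linv t.
Proof.
rewrite gen_step_rcons; case: a t => e x [f []] /=; rewrite /linv /= xpair_eqE.
  by case=> -> [_ ef]; apply/negP => /andP [/eqP E _]; apply: ef; rewrite E.
by case=> -> [_ [ef _]]; apply/negP => /andP [/eqP E _]; apply: ef; rewrite E.
Qed.

Lemma gen_step_sel (b : seq L) a : b != [::] -> gen_step b a -> a.2 = true -> sel b a.1.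
Proof.
case/lastP: b => [|b t] // _; rewrite gen_step_rcons.
by case: t.2 => [[->]|[_ [_ [_ sel_a]]]].
Qed.

Lemma generated_reduced w : generated w -> reduced w.
Proof.
elim=> [|b a gen_b IH step_a] //; case/lastP: b gen_b IH step_a => [|b t] // _ IH step_a.
by rewrite reduced_rcons IH (gen_step_linv step_a).
Qed.

Hypothesis sel_reps : selects_reps.

Lemma generated_root :
  (exists v, part v = true /\ forall a, generated (lmul a [::]) <-> (a.2 = false /\ src a.1 = v)) \/
  (exists v, part v = false /\
    (forall a, generated (lmul a [::]) -> a.2 = true /\ rng a.1 = v) /\
    (forall e, rng e = v -> exists g, (cls g = cls e /\ generated (lmul (g, true) [::])) /\
       forall g', cls g' = cls e -> generated (lmul (g', true) [::]) -> g' = g)).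
Proof.
case Pv: (part v0); [left|right]; exists v0; split=> //; rewrite ?lmul_nil.
  by move=> a; rewrite lmul_nil generated1 gen_step_nil Pv.
split=> [a|e Re]; first by rewrite lmul_nil generated1 gen_step_nil Pv => -[-> [-> _]].
have [g [Cg [sel_g U]]] := @sel_reps [::] e generated_nil (conj Pv Re).
exists g; rewrite lmul_nil generated1 gen_step_nil Pv; split.
  by split=> //; split=> //; split=> //; rewrite -Re; apply: cls_rng.
by move=> g' Cg'; rewrite lmul_nil generated1 gen_step_nil Pv => -[_ [_ /(U _ Cg')]].
Qed.

Lemma generated_children_inv b e : generated (rcons b (e, true)) ->
  forall a, generated (lmul a (rcons b (e, true))) <-> (a.2 = false /\ src a.1 = src e).
Proof.
move=> gen_be a; case: (eqVneq a (linv (e, true))) => [->|ne_a].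
  by rewrite lmul_linv; split=> // _; case/generated_rcons: gen_be.
rewrite lmul_rcons // generated_rcons gen_step_rcons /=; split; first by case=> _ [-> [-> _]].
case=> A B; split=> //; split=> //; split=> // E; move: ne_a; rewrite /linv /=.
by case: a A B E => a1 a2 /= -> _ ->; rewrite eqxx.
Qed.

Lemma generated_children_edge b e e0 : generated (rcons b (e, false)) -> rng e0 = rng e ->
  exists g, (cls g = cls e0 /\ generated (lmul (g, true) (rcons b (e, false)))) /\
    forall g', cls g' = cls e0 -> generated (lmul (g', true) (rcons b (e, false))) -> g' = g.
Proof.
move=> gen_be Re0; case: (pselect (cls e0 = cls e)) => Ce.
  exists e; split.
    by split=> //; rewrite -[(e, true)]/(linv (e, false)) lmul_linv; case/generated_rcons: gen_be.
  move=> g' Cg'; case: (eqVneq g' e) => // ne_g'; rewrite lmul_rcons; last first.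
    by rewrite /linv /= xpair_eqE negb_and ne_g'.
  by rewrite generated_rcons gen_step_rcons /= => -[_ [_ [_ []]]]; rewrite Cg'.
have need_e0 : needs_rep (rcons b (e, false)) e0 by rewrite needs_rep_rcons.
have [g [Cg [sel_g U]]] := sel_reps gen_be need_e0.
have ne_g : cls g <> cls e by rewrite Cg.
exists g; split.
  split=> //; rewrite lmul_rcons ?cls_neq_linv // generated_rcons gen_step_rcons /=.
  split=> //; split=> //; split; last by split.
  by rewrite -Re0; apply: cls_rng.
move=> g' Cg'; rewrite lmul_rcons ?cls_neq_linv ?Cg' // generated_rcons gen_step_rcons.
by case=> _ [_ [_ [_ /(U _ Cg')]]].
Qed.

Lemma config_generated : config generated.
Proof.
split; first exact: generated_reduced.
split; first by constructor.
split; first by move=> w k; apply: generated_take.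
case/lastP => [|b [e []]] gen_w; first exact: generated_root.
  left; exists (src e); split; first exact: src_part.
  exact: generated_children_inv.
right; exists (rng e); split; first exact: rng_part.
split=> [a|e0 Re0]; last exact: generated_children_edge.
case: (eqVneq a (linv (e, false))) => [->|ne_a] //.
by rewrite lmul_rcons // generated_rcons gen_step_rcons /= => -[_ [-> [-> _]]].
Qed.
End Generated.

Section ConfigIsGenerated.
Variable xi : seq L -> Prop.
Hypothesis xi_config : config xi.
Variable v0 : vtx G.
Hypothesis xi_root : rooted_at xi v0.

Definition config_sel (b : seq L) (g : edg G) : Prop := xi (rcons b (g, true)).

Lemma config_root_step a : xi [:: a] <-> gen_step v0 config_sel [::] a.
Proof.
rewrite gen_step_nil; case: xi_root => [[-> ->] //|[-> [in_v _]]].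
split=> [xi_a|[A [_ sel_a]]]; last by move: sel_a; rewrite /config_sel /= -(letterT A).
have [A R] := in_v _ xi_a; do 2 split=> //; by rewrite /config_sel /= -(letterT A).
Qed.

Lemma config_inv_step b e a : xi (rcons b (e, true)) ->
  xi (rcons (rcons b (e, true)) a) <-> gen_step v0 config_sel (rcons b (e, true)) a.
Proof.
move=> xi_be; have [out _] := config_children xi_config xi_be.
rewrite gen_step_rcons /=; case: (eqVneq a (linv (e, true))) => [->|ne_a].
  by split=> [/config_no_backtrack|[_ [_ []]]].
rewrite -lmul_rcons // (out erefl); split=> [[A S]|[A [S _]]] //; do 2 split=> //.
by move=> E; move: ne_a; rewrite (letterF A) E /linv eqxx.
Qed.

Lemma config_edge_step b e a : xi (rcons b (e, false)) ->
  xi (rcons (rcons b (e, false)) a) <-> gen_step v0 config_sel (rcons b (e, false)) a.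
Proof.
move=> xi_be; have [_ /(_ erefl) [in_e reps]] := config_children xi_config xi_be.
rewrite gen_step_rcons /=; case: (eqVneq a (linv (e, false))) => [->|ne_a].
  by split=> [/config_no_backtrack|[_ [_ []]]].
split=> [|[A [_ [_ sel_a]]]]; last by move: sel_a; rewrite /config_sel -(letterT A).
rewrite -lmul_rcons // => xi_a.
have [A R] := in_e _ xi_a; do 2 split=> //; split.
  2: by rewrite /config_sel -(letterT A) -lmul_rcons.
move=> Ce; have [g [_ U]] := reps e erefl.
have Ee : e = g.
  by apply: U; rewrite // -[(e, true)]/(linv (e, false)) lmul_linv; apply: config_rcons xi_be.
have Ea : a.1 = g by apply: U; rewrite // -(letterT A).
by move: ne_a; rewrite (letterT A) Ea -Ee /linv eqxx.
Qed.

Lemma config_child_step b a : xi b -> (xi (rcons b a) <-> gen_step v0 config_sel b a).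
Proof.
case/lastP: b => [|b [e []]] xi_b; first exact: config_root_step.
  exact: config_inv_step.
exact: config_edge_step.
Qed.

Lemma config_generatedE w : xi w <-> generated v0 config_sel w.
Proof.
elim/last_ind: w => [|b a IH].
  by split=> _; [constructor|case: xi_config => _ []].
rewrite generated_rcons -IH; split=> [xi_ba|[xi_b]].
  by have xi_b := config_rcons xi_config xi_ba; split=> //; apply/config_child_step.
by move/config_child_step; apply.
Qed.

Lemma config_sel_reps : selects_reps v0 config_sel.
Proof.
move=> b g /config_generatedE; case/lastP: b => [|b t] xi_b.
  rewrite needs_rep_nil; case: xi_root => [[-> _] []//|[_ [_ reps]] [_ /reps]].
  by case=> g' [[Cg' xi_g'] U]; exists g'; split.
rewrite needs_rep_rcons; case: t xi_b => e x xi_b /= [Ex [Rg Cg]]; subst x.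
have [_ /(_ erefl) [_ reps]] := config_children xi_config xi_b.
have [g' [[Cg' xi_g'] U]] := reps g Rg.
have ne h : cls h = cls g -> (h, true) != linv (e, false) by move=> Ch; apply: cls_neq_linv; rewrite Ch.
exists g'; split=> //; split; first by rewrite /config_sel -lmul_rcons ?ne.
by move=> g'' C'' sel_g''; apply: U; rewrite // lmul_rcons ?ne.
Qed.
End ConfigIsGenerated.

Lemma config_is_generated xi : config xi -> exists v0 sel,
  selects_reps v0 sel /\ forall w, xi w <-> generated v0 sel w.
Proof.
move=> xi_config; have [v0 xi_root] := config_rooted xi_config.
exists v0, (config_sel xi); split; first exact: config_sel_reps.
exact: config_generatedE.
Qed.

Definition class_rep (h : edg G) : edg G := odflt h [pick h' | cls h' == cls h].

Lemma class_rep_cls h : cls (class_rep h) = cls h.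
Proof. by rewrite /class_rep; case: pickP => [h' /eqP|]. Qed.

Lemma class_rep_eq h h' : cls h = cls h' -> class_rep h = class_rep h'.
Proof.
move=> E; rewrite /class_rep E; case: pickP => [//|none].
by have := none h'; rewrite eqxx.
Qed.

Lemma class_rep_id h : class_rep (class_rep h) = class_rep h.
Proof. by apply: class_rep_eq; rewrite class_rep_cls. Qed.

Definition choice_letter (a : L) : Prop := a.2 = false /\
  exists f g, rng f = rng a.1 /\ cls f <> cls a.1 /\ cls g = cls f /\ g <> f.

(* Re-selecting [y'] instead of [y] in the class of [fcl] at node [beta]
   changes the generated configuration only on the subtrees above
   [beta (y, true)] and [beta (y', true)]; above the latter the canonical
   representatives are used. *)
Section Reselect.
Variables (v0 : vtx G) (sel : seq L -> edg G -> Prop).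
Hypothesis sel_reps : selects_reps v0 sel.
Variables (beta : seq L) (fcl y y' : edg G).
Hypothesis beta_nil : beta != [::].
Hypothesis y_unique : forall h, cls h = cls fcl -> sel beta h -> h = y.
Hypothesis y'_cls : cls y' = cls fcl.
Hypothesis y_cls : cls y = cls fcl.
Hypothesis y'_y : y' <> y.

Definition reselect (b : seq L) (h : edg G) : Prop :=
  if prefix (rcons beta (y', true)) b then class_rep h = h
  else if (b == beta) && (cls h == cls fcl) then h = y' else sel b h.

Lemma reselectE b h : ~~ prefix (rcons beta (y', true)) b ->
  ~~ ((b == beta) && (cls h == cls fcl)) -> reselect b h = sel b h.
Proof. by move=> /negbTE not_y' /negbTE not_beta; rewrite /reselect not_y' not_beta. Qed.

Lemma reselect_beta h : cls h = cls fcl -> reselect beta h = (h = y').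
Proof. by move=> Ch; rewrite /reselect (negbTE (prefix_rcons_self _ _)) eqxx Ch eqxx. Qed.

Lemma gen_step_reselect w a :
  ~~ prefix (rcons beta (y, true)) (rcons w a) -> ~~ prefix (rcons beta (y', true)) (rcons w a) ->
  ~~ prefix (rcons beta (y', true)) w ->
  gen_step v0 sel w a = gen_step v0 reselect w a.
Proof.
move=> not_y not_y' not_y'w; case/lastP: w not_y not_y' not_y'w => [|w t] not_y not_y' not_y'w.
  have not_beta : ~~ (([::] == beta) && (cls a.1 == cls fcl)) by rewrite eq_sym (negbTE beta_nil).
  by rewrite !gen_step_nil reselectE.
rewrite !gen_step_rcons; case: (t.2) => //.
case E: ((rcons w t == beta) && (cls a.1 == cls fcl)); last by rewrite reselectE ?E.
move/andP: E => [/eqP Eb /eqP Ec]; apply: propext; split=> [[A [_ [_ sel_a]]]|[A [_ [_]]]].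
  by move: not_y; rewrite Eb in sel_a *; rewrite (letterT A) (y_unique Ec sel_a) prefix_refl.
by rewrite Eb reselect_beta // => Ea; move: not_y'; rewrite (letterT A) Ea Eb prefix_refl.
Qed.

Lemma generated_reselect w :
  ~~ prefix (rcons beta (y, true)) w -> ~~ prefix (rcons beta (y', true)) w ->
  (generated v0 sel w <-> generated v0 reselect w).
Proof.
elim/last_ind: w => [|w a IH] not_y not_y'; first by split=> _; constructor.
have not_yw : ~~ prefix (rcons beta (y, true)) w by apply: contra not_y; apply: prefix_rconsW.
have not_y'w : ~~ prefix (rcons beta (y', true)) w by apply: contra not_y'; apply: prefix_rconsW.
by rewrite !generated_rcons (IH not_yw not_y'w) gen_step_reselect.
Qed.

Lemma reselect_avoids_y w : generated v0 reselect w -> ~~ prefix (rcons beta (y, true)) w.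
Proof.
move=> gen_w; apply/negP => le_w; have := generated_prefix le_w gen_w.
case/generated_rcons => _ /(gen_step_sel beta_nil) /(_ erefl) /=.
by rewrite reselect_beta // => E; apply: y'_y.
Qed.

Lemma reselect_reps : selects_reps v0 reselect.
Proof.
move=> b g gen_b need_g; case P1: (prefix (rcons beta (y', true)) b).
  exists (class_rep g); rewrite /reselect P1 class_rep_cls class_rep_id.
  by do 2 split=> //; move=> g'' C1 <-; rewrite (class_rep_eq C1).
case P2: ((b == beta) && (cls g == cls fcl)).
  move/andP: P2 => [/eqP -> /eqP Eg]; exists y'; rewrite y'_cls Eg reselect_beta //.
  by do 2 split=> //; move=> g'' Cg''; rewrite reselect_beta.
have gen_b' : generated v0 sel b by apply/(generated_reselect (reselect_avoids_y gen_b)); rewrite ?P1.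
have [g' [Cg' [sel_g' U]]] := sel_reps gen_b' need_g; exists g'; split=> //.
have not_beta h : cls h = cls g -> ~~ ((b == beta) && (cls h == cls fcl)) by move=> ->; rewrite P2.
split; first by rewrite reselectE ?P1 ?not_beta.
by move=> g'' C'' S''; apply: U => //; rewrite -reselectE ?P1 ?not_beta.
Qed.
End Reselect.

(** * Isolated configurations lie over V(A_DE) *)

Lemma dclosure_base (A : L -> Prop) a : A a -> dclosure A a.
Proof. by move=> Aa B AB _; apply: AB. Qed.

Lemma dclosure_inv (A : L -> Prop) e : (exists e', src e' = src e /\ e' <> e) ->
  (forall e', src e' = src e -> e' <> e -> dclosure A (e', false)) -> dclosure A (e, true).
Proof.
move=> two_e cl B AB B_closed; apply: (B_closed.1 (src e) e (src_part e) erefl two_e).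
by move=> e' Se' ne'; apply: cl.
Qed.

Lemma dclosure_edge (A : L -> Prop) e : (exists f, rng f = rng e /\ cls f <> cls e) ->
  (forall f, rng f = rng e -> cls f <> cls e -> exists g, cls g = cls f /\ dclosure A (g, true)) ->
  dclosure A (e, false).
Proof.
move=> two_C cl B AB B_closed; apply: (B_closed.2 (rng e) e (rng_part e) erefl two_C _ e erefl).
by move=> f Rf Cf; have [g [Cg cl_g]] := cl f Rf Cf; exists g; split=> //; apply: cl_g.
Qed.

Lemma adm_stepP (t a : L) : adm_step t a ->
  (t.2 = true -> a.2 = false /\ src a.1 = src t.1 /\ a.1 <> t.1) /\
  (t.2 = false -> a.2 = true /\ rng a.1 = rng t.1 /\ cls a.1 <> cls t.1).
Proof.
case: t a => e x [f z]; rewrite /adm_step /lsrc /ltgt => /andP [/eqP E /andP [N1 N2]].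
move: E N1 N2; case: x; case: z => /= E N1 N2; split=> // _.
- by have := src_part e; rewrite E rng_part.
- by do 2 split=> //; move=> Ef; move: N1; rewrite Ef eqxx.
- by do 2 split=> //; move=> Ef; move: N2; rewrite Ef eqxx.
- by have := rng_part e; rewrite E src_part.
Qed.

Lemma sub_count_lt (T : eqType) (P1 P2 : pred T) (s : seq T) :
  (forall x, P1 x -> P2 x) -> (exists2 x, x \in s & P2 x && ~~ P1 x) -> count P1 s < count P2 s.
Proof.
move=> sub12 [x xs /andP [P2x notP1x]]; elim: s xs => // y s IH.
rewrite inE => /orP [/eqP <-|xs] /=.
  by rewrite (negbTE notP1x) P2x add0n add1n ltnS; apply: sub_count.
rewrite -addnS; apply: leq_add; last exact: IH.
by case E: (P1 y) => //; rewrite (sub12 _ E).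
Qed.

Section Isolated.
Variables (xi : seq L -> Prop) (v0 : vtx G) (sel : seq L -> edg G -> Prop).
Hypothesis xi_config : config xi.
Hypothesis sel_reps : selects_reps v0 sel.
Hypothesis xiE : forall w, xi w <-> generated v0 sel w.
Variable F : seq (seq L).
Hypothesis xi_isolated : forall eta, config eta -> agree F eta xi -> forall w, eta w <-> xi w.

(* At a choice node [xi] could have selected another representative. *)
Definition choice_node (b : seq L) :=
  xi b /\ exists b' e, b = rcons b' (e, false) /\ choice_letter (e, false).

Lemma choice_node_in_window beta : choice_node beta -> exists2 w, w \in F & prefix beta w.
Proof.
case=> xi_beta [b [e [Ebeta [_ [f [g' [Rf [Cf [Cg' ne_g']]]]]]]]].
have gen_beta : generated v0 sel beta by apply/xiE.
have need_f : needs_rep v0 beta f by rewrite Ebeta needs_rep_rcons.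
have [y [Cy [sel_y U]]] := sel_reps gen_beta need_f.
pose y' := if y == f then g' else f.
have Cy' : cls y' = cls f by rewrite /y'; case: ifP.
have ne_y' : y' <> y by rewrite /y'; case: eqP => [->|/nesym //].
apply: contrapT => outside.
have out_F z w : w \in F -> ~~ prefix (rcons beta z) w.
  move=> wF; apply/negP => le_w; apply: outside; exists w => //.
  exact: prefix_trans (prefix_rcons _ _) le_w.
have beta_nil : beta != [::] by rewrite Ebeta -size_eq0 size_rcons.
have eqv := @generated_reselect v0 sel _ f y y' beta_nil U.
pose eta := generated v0 (reselect sel beta f y').
have eta_config : config eta.
  exact/config_generated/(reselect_reps sel_reps beta_nil U Cy' Cy ne_y').
have eta_agree : agree F eta xi by move=> w wF; rewrite xiE; symmetry; apply: eqv; apply: out_F.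
have gen_y' : generated v0 sel (rcons beta (y', true)).
  apply/xiE/(xi_isolated eta_config eta_agree)/generated_rcons; split.
    exact/(eqv _ (prefix_rcons_self _ _) (prefix_rcons_self _ _)).
  rewrite Ebeta gen_step_rcons /= -Ebeta reselect_beta //; split=> //; split; last by rewrite Cy'.
  by rewrite -Rf; apply: cls_rng.
case/generated_rcons: gen_y' => _ /(gen_step_sel beta_nil) /(_ erefl) /(U _ Cy').
exact: ne_y'.
Qed.

Lemma xi_child b t a : xi (rcons b t) -> gen_step v0 sel (rcons b t) a -> xi (rcons (rcons b t) a).
Proof. by move=> xi_bt step_a; apply/xiE/generated_rcons; split=> //; apply/xiE. Qed.

Lemma xi_rep_child b e f : xi (rcons b (e, false)) -> rng f = rng e -> cls f <> cls e ->
  exists g, cls g = cls f /\ xi (rcons (rcons b (e, false)) (g, true)).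
Proof.
move=> xi_be Rf Cf; have gen_be : generated v0 sel (rcons b (e, false)) by apply/xiE.
have need_f : needs_rep v0 (rcons b (e, false)) f by rewrite needs_rep_rcons.
have [g [Cg [sel_g _]]] := sel_reps gen_be need_f.
exists g; split=> //; apply: xi_child => //; rewrite gen_step_rcons /=; split=> //; split.
  by rewrite -Rf; apply: cls_rng.
by rewrite Cg.
Qed.

Definition no_choice_above (p : seq L) := forall beta, choice_node beta -> ~~ prefix p beta.

(* Without choice nodes above it, a node of [xi] extends along every
   admissible path: at an edge node the next letter must be the selected
   representative, for otherwise that node would be a choice node. *)
Lemma admissible_path_in_config (w : seq L) : forall b t, xi (rcons b t) ->
  no_choice_above (rcons b t) -> sorted (@adm_step G) (t :: w) -> ~ choice_letter (last t w).
Proof.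
elim: w => [|a w IH] b [e x] xi_bt no_choice.
  move=> _ [/= Ex choice_e]; subst x.
  have choice_be : choice_node (rcons b (e, false)) by split=> //; exists b, e.
  by have := no_choice _ choice_be; rewrite prefix_refl.
case/andP => step_a path_w; have [inv_step edge_step] := adm_stepP step_a.
apply: (IH (rcons b (e, x)) a); last exact: path_w.
  apply: xi_child => //; rewrite gen_step_rcons; case: x xi_bt no_choice {step_a} inv_step edge_step => xi_bt no_choice inv_step edge_step /=.
    by have [-> [-> ?]] := inv_step erefl.
  have [Ea [Ra Ca]] := edge_step erefl; do 3 split=> //.
  have gen_be : generated v0 sel (rcons b (e, false)) by apply/xiE.
  have need_a : needs_rep v0 (rcons b (e, false)) a.1 by rewrite needs_rep_rcons.
  have [y [Cy [sel_y U]]] := sel_reps gen_be need_a.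
  case: (eqVneq a.1 y) => [-> //|ne_y].
  have choice_be : choice_node (rcons b (e, false)).
    split=> //; exists b, e; do 2 split=> //; exists a.1, y; do 3 split=> //.
    by move=> E; move: ne_y; rewrite E eqxx.
  by have := no_choice _ choice_be; rewrite prefix_refl.
move=> beta choice_beta; apply/negP => le_beta; have := no_choice _ choice_beta.
by rewrite (prefix_trans (prefix_rcons _ _) le_beta).
Qed.

Lemma dead_end_of_no_choice_above b t :
  xi (rcons b t) -> no_choice_above (rcons b t) -> dead_end t.
Proof.
move=> xi_bt no_choice [w [x0 [/andP [_ path_w] [last_F [f [g [Rf [Cf [Cg ne_g]]]]]]]]].
by apply: (admissible_path_in_config xi_bt no_choice path_w); split=> //; exists f, g.
Qed.

Definition window_prefixes : seq (seq L) :=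
  flatten [seq [seq take k w | k <- iota 0 (size w).+1] | w <- F].

Lemma mem_window_prefixes p w : w \in F -> prefix p w -> p \in window_prefixes.
Proof.
move=> wF le_p; apply/flatten_mapP; exists w => //; apply/mapP; exists (size p).
  by rewrite mem_iota add0n ltnS size_prefix.
by move: le_p; rewrite prefixE => /eqP ->.
Qed.

Lemma choice_node_window beta : choice_node beta -> beta \in window_prefixes.
Proof. by case/choice_node_in_window => w wF le_beta; apply: mem_window_prefixes le_beta. Qed.

Definition window_height := \max_(p <- window_prefixes) size p.

Lemma size_window_prefix p : p \in window_prefixes -> size p <= window_height.
Proof. by move=> pP; rewrite /window_height (big_rem p pP) /= leq_maxl. Qed.

Definition choice_count (a : seq L) :=
  count (fun b => `[< choice_node b >] && prefix a b) window_prefixes.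
Definition choice_measure (a : seq L) :=
  choice_count a * window_height.+2 + (window_height.+1 - size a).

Lemma choice_measure_child p a :
  (exists beta, choice_node beta /\ prefix p beta) -> choice_measure (rcons p a) < choice_measure p.
Proof.
case=> beta [choice_beta le_beta].
have size_p : size p <= window_height.
  exact: leq_trans (size_prefix le_beta) (size_window_prefix (choice_node_window choice_beta)).
have le_count : choice_count (rcons p a) <= choice_count p.
  by apply: sub_count => b /andP [-> /(prefix_trans (prefix_rcons _ _))].
rewrite /choice_measure size_rcons; case: (pselect (choice_node p)) => choice_p.
  have : choice_count (rcons p a) < choice_count p.
    apply: sub_count_lt => [b /andP [-> /(prefix_trans (prefix_rcons _ _)) -> //]|].
    exists p; first exact: choice_node_window.
    by rewrite (asboolT choice_p) prefix_refl (negbTE (prefix_rcons_self _ _)).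
  have : window_height.+1 - (size p).+1 < window_height.+2 by rewrite ltnS leq_subr.
  move: (choice_count _) (choice_count _) (_ - _) (_ - _) => c' c r' r *; nia.
have : window_height.+1 - (size p).+1 < window_height.+1 - size p.
  by rewrite subnS prednK // subn_gt0 ltnS.
move: le_count; move: (choice_count _) (choice_count _) (_ - _) (_ - _) => c' c r' r *; nia.
Qed.

Lemma node_has_child b t : (exists beta, choice_node beta /\ prefix (rcons b t) beta) ->
  choice_node (rcons b t) \/ exists a, xi (rcons (rcons b t) a).
Proof.
case=> beta [choice_beta le_beta]; case: (eqVneq (rcons b t) beta) => [->|ne_beta]; first by left.
right; have [a le_a] := prefix_proper le_beta ne_beta; exists a.
by apply: config_prefix le_a; case: choice_beta.
Qed.

(* Induction on [choice_measure]: below the window, letters are dead ends;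
   inside it, the closure rules propagate from the children. *)
Lemma node_letter_in_closure_lt n b t :
  choice_measure (rcons b t) < n -> xi (rcons b t) -> dclosure (@dead_end G) t.
Proof.
elim: n b t => // n IH b t lt_n xi_bt.
case: (pselect (exists beta, choice_node beta /\ prefix (rcons b t) beta)) => [above|no_above]; last first.
  apply: dclosure_base; apply: (dead_end_of_no_choice_above xi_bt) => beta choice_beta.
  by apply/negP => le_beta; apply: no_above; exists beta.
have IHc a : xi (rcons (rcons b t) a) -> dclosure (@dead_end G) a.
  by apply: IH; exact: leq_trans (choice_measure_child a above) lt_n.
have child := node_has_child above; have gen_bt : generated v0 sel (rcons b t) by apply/xiE.
case: t xi_bt child IHc gen_bt {lt_n above} => e [] xi_bt child IHc gen_bt.
  apply: dclosure_inv => [|e' Se' ne_e']; last first.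
    by apply: IHc; apply: xi_child; rewrite // gen_step_rcons.
  case: child => [[_ [b' [e' [/rcons_inj [_ //]]]]]|[a /xiE /generated_rcons [_]]].
  by rewrite gen_step_rcons /= => -[_ [Sa ne_a]]; exists a.1.
apply: dclosure_edge => [|f Rf Cf]; last first.
  by have [g [Cg xi_g]] := xi_rep_child xi_bt Rf Cf; exists g; split=> //; apply: IHc.
case: child => [[_ [b' [e' [/rcons_inj [_ <-] [_ [f [_ [Rf [Cf _]]]]]]]]]|]; first by exists f.
case=> a /xiE /generated_rcons [_]; rewrite gen_step_rcons /= => -[_ [Ra [Ca _]]].
by exists a.1.
Qed.

Lemma node_letter_in_closure b t : xi (rcons b t) -> dclosure (@dead_end G) t.
Proof. exact: node_letter_in_closure_lt (ltnSn _). Qed.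

Lemma isolated_in_Vset v : config_v v xi -> Vset (@dead_end G) v.
Proof.
rewrite /config_v /Vset; case Pv: (part v).
  case=> e [Se xi_e]; right; split=> // e' Se'.
  have := xi_e; rewrite xiE generated1 gen_step_nil; case P0: (part v0); last by case.
  case=> _ S0.
  apply: (@node_letter_in_closure [::]); apply/xiE/generated1.
  by rewrite gen_step_nil P0 Se' -Se S0.
case=> e [Re [f [Cf xi_f]]]; left; split=> // e' Re'.
have := xi_f; rewrite xiE generated1 gen_step_nil; case P0: (part v0); first by case.
case=> _ [R0 _].
have Ev : v0 = v by rewrite -R0 -Re; apply: cls_rng Cf.
have need_e' : needs_rep v0 [::] e' by rewrite needs_rep_nil P0 Ev.
have [g [Cg [sel_g _]]] := sel_reps (generated_nil v0 sel) need_e'.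
exists g; split=> //; apply: (@node_letter_in_closure [::]); apply/xiE/generated1.
by rewrite gen_step_nil P0; do 2 split=> //; rewrite Ev -Re'; apply: cls_rng.
Qed.
End Isolated.

Lemma isolated_Vset v (xi : seq L -> Prop) :
  config xi -> config_v v xi -> isolated xi -> Vset (@dead_end G) v.
Proof.
move=> xi_config xi_v [F xi_isolated]; have [v0 [sel [sel_reps xiE]]] := config_is_generated xi_config.
exact: (isolated_in_Vset xi_config sel_reps xiE xi_isolated xi_v).
Qed.

(** * The canonical configuration over V(A_DE) is isolated *)

Definition inv_rule (B : L -> Prop) (e : edg G) :=
  (exists e', src e' = src e /\ e' <> e) /\ forall e', src e' = src e -> e' <> e -> B (e', false).
Definition edge_rule (B : L -> Prop) (g : edg G) :=
  (exists f, rng f = rng g /\ cls f <> cls g) /\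
  forall f, rng f = rng g -> cls f <> cls g -> exists h, cls h = cls f /\ B (h, true).

Fixpoint dead_stage (n : nat) (a : L) : Prop :=
  if n is n.+1 then
    dead_stage n a \/ (a.2 = true /\ inv_rule (dead_stage n) a.1) \/
    (a.2 = false /\ edge_rule (dead_stage n) a.1)
  else dead_end a.

Lemma dead_stage_mono n m a : n <= m -> dead_stage n a -> dead_stage m a.
Proof.
elim: m => [|m IH]; first by rewrite leqn0 => /eqP ->.
by rewrite leq_eqVlt => /orP [/eqP -> //|lt_nm] stage_n; left; apply: IH.
Qed.

Definition staged (a : L) := exists n, dead_stage n a.

Lemma staged_dclosed : dclosed staged.
Proof.
split=> [v e Pv Se two_e staged_e'|v e Pv Re two_C staged_C g Cg].
  have [N stage_N] := @ex_uniform_bound_in _ (fun e' => src e' = v /\ e' <> e)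
    (fun e' n => dead_stage n (e', false)) (fun x n m le_nm => dead_stage_mono le_nm)
    (fun x Qx => staged_e' x Qx.1 Qx.2).
  exists N.+1; right; left; split=> //; split; first by rewrite Se.
  by move=> e' Se' ne'; apply: stage_N; rewrite Se'.
have [x n m le_nm [h [Ch stage_n]]|f [Rf Cf]|N stage_N] := @ex_uniform_bound_in _
    (fun f => rng f = v /\ cls f <> cls e) (fun f n => exists h, cls h = cls f /\ dead_stage n (h, true)).
- by exists h; split=> //; apply: dead_stage_mono stage_n.
- by have [h [Ch [n stage_n]]] := staged_C f Rf Cf; exists n, h.
have Rg : rng g = v by rewrite -Re; apply: cls_rng.
exists N.+1; right; right; split=> //; split.
  by case: two_C => f [Rf Cf]; exists f; rewrite Rg Cg.
by move=> f Rf Cf; apply: stage_N; rewrite -?Rg -?Cg.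
Qed.

Lemma dclosure_staged a : dclosure (@dead_end G) a -> staged a.
Proof. by apply; [move=> b dead_b; exists 0|exact: staged_dclosed]. Qed.

Definition least_stage (h : edg G) (n : nat) :=
  dead_stage n (h, true) /\ forall m, dead_stage m (h, true) -> n <= m.
Definition stage_rank (h : edg G) : nat := epsilon (inhabits 0) (least_stage h).

Lemma stage_rankP h n :
  dead_stage n (h, true) -> dead_stage (stage_rank h) (h, true) /\ stage_rank h <= n.
Proof.
move=> stage_n; have [k stage_k min_k] := ex_least_nat (ex_intro (fun m => dead_stage m (h, true)) n stage_n).
have [stage_r min_r] : least_stage h (stage_rank h) by apply: epsilon_spec; exists k.
by split=> //; apply: min_r.
Qed.

Definition staged_in_class (h : edg G) : pred (edg G) :=
  fun h' => (cls h' == cls h) && `[< staged (h', true) >].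

Definition canon_rep (h : edg G) : edg G :=
  if [pick h' | staged_in_class h h'] is Some h0
  then [arg min_(h' < h0 | staged_in_class h h') stage_rank h']
  else class_rep h.

Lemma canon_rep_eq h h' : cls h = cls h' -> canon_rep h = canon_rep h'.
Proof.
move=> E; rewrite /canon_rep (class_rep_eq E).
by have -> : staged_in_class h = staged_in_class h' by rewrite /staged_in_class E.
Qed.

Lemma canon_rep_cls h : cls (canon_rep h) = cls h.
Proof.
rewrite /canon_rep; case: pickP => [h0 staged_h0|_]; last exact: class_rep_cls.
by case: arg_minnP => // i /andP [/eqP].
Qed.

Lemma canon_rep_id h : canon_rep (canon_rep h) = canon_rep h.
Proof. by apply: canon_rep_eq; rewrite canon_rep_cls. Qed.

Lemma canon_rep_stage h n : dead_stage n (h, true) -> dead_stage n (canon_rep h, true).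
Proof.
move=> stage_n; have staged_h : staged_in_class h h by rewrite /staged_in_class eqxx; apply/asboolP; exists n.
rewrite /canon_rep; case: pickP => [h0 staged_h0|none]; last by rewrite none in staged_h.
case: arg_minnP => // i /andP [_ /asboolP [m stage_m]] min_i.
have [stage_i _] := stage_rankP stage_m; have [_ le_h] := stage_rankP stage_n.
exact: dead_stage_mono (leq_trans (min_i h staged_h) le_h) stage_i.
Qed.

Definition canon_step (a b : L) : Prop :=
  if a.2 then b.2 = false /\ src b.1 = src a.1 /\ b.1 <> a.1
  else b.2 = true /\ rng b.1 = rng a.1 /\ cls b.1 <> cls a.1 /\ canon_rep b.1 = b.1.
Definition canon_stepb (a b : L) : bool := `[< canon_step a b >].

Lemma canon_step_adm a b : canon_step a b -> adm_step a b.
Proof.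
case: a b => e x [f z]; rewrite /canon_step /adm_step /lsrc /ltgt /=.
case: x => [[-> [-> ne_f]]|[-> [-> [ne_f _]]]] /=; rewrite eqxx //=.
  by rewrite andbT; apply/eqP.
by apply/eqP.
Qed.

Lemma sorted_canon_adm (w : seq L) : sorted canon_stepb w -> sorted (@adm_step G) w.
Proof.
case: w => // a w /=; elim: w a => // b w IH a /= /andP [/asboolP step_b path_w].
by rewrite canon_step_adm // IH.
Qed.

Definition few_choice_paths (a : L) := exists l : seq (seq L),
  forall w, sorted canon_stepb (a :: w) -> choice_letter (last a w) -> w \in l.

Lemma few_choice_paths_dead_end a : dead_end a -> few_choice_paths a.
Proof.
move=> dead_a; exists [::] => w path_w [last_F [f [g choice_f]]]; case: dead_a; exists w, a.
by split; [rewrite /admissible (sorted_canon_adm path_w)|split=> //; exists f, g].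
Qed.

Lemma few_choice_paths_step a :
  (forall b, canon_step a b -> few_choice_paths b) -> few_choice_paths a.
Proof.
move=> few_b; have [b /few_b [l Rl]|l Rl] := @ex_uniform_cover_in _ _ (canon_step a)
  (fun b w => sorted canon_stepb (b :: w) /\ choice_letter (last b w)).
  by exists l => w [path_w choice_w]; apply: Rl.
exists ([::] :: [seq b :: w | b <- enum L, w <- l]) => [[|b w]]; rewrite inE //=.
case/andP => /asboolP step_b path_w choice_w.
by apply/allpairsP; exists (b, w); rewrite mem_enum; split=> //; apply: (Rl b).
Qed.

Lemma dead_stage_few_choice_paths n a : dead_stage n a -> few_choice_paths a.
Proof.
elim: n a => [|n IH] a; first exact: few_choice_paths_dead_end.
case=> [|[[A [_ rule]]|[A [_ rule]]]]; first exact: IH.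
  apply: few_choice_paths_step => b; rewrite /canon_step A => -[Bf [Sb ne_b]].
  by apply: IH; rewrite (letterF Bf); apply: rule.
apply: few_choice_paths_step => b; rewrite /canon_step A => -[Bt [Rb [Cb canon_b]]].
have [h [Ch stage_h]] := rule b.1 Rb Cb.
by apply: (IH b); rewrite (letterT Bt) -canon_b -(canon_rep_eq Ch); apply: canon_rep_stage.
Qed.

Section CanonicalConfig.
Variable v : vtx G.

Definition canon_sel (b : seq L) (h : edg G) : Prop := canon_rep h = h.
Definition canon_config := generated v canon_sel.

Lemma canon_sel_reps : selects_reps v canon_sel.
Proof.
move=> b g _ _; exists (canon_rep g); rewrite canon_rep_cls /canon_sel canon_rep_id.
by do 2 split=> //; move=> g'' C <-; rewrite (canon_rep_eq C).
Qed.

Lemma canon_config_config : config canon_config.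
Proof. exact/config_generated/canon_sel_reps. Qed.

Lemma canon_config_cons a w : canon_config (a :: w) ->
  gen_step v canon_sel [::] a /\ sorted canon_stepb (a :: w).
Proof.
elim/last_ind: w => [|w x IH]; first by move/generated1.
rewrite -rcons_cons => /generated_rcons [/IH [step_a path_w] step_x]; split=> //.
by rewrite /= rcons_path; rewrite /= in path_w; rewrite path_w /=; apply/asboolP.
Qed.

Hypothesis v_V : Vset (@dead_end G) v.

Lemma root_few_choice_paths a : gen_step v canon_sel [::] a -> few_choice_paths a.
Proof.
rewrite gen_step_nil; case Pv: (part v) => step_a.
  case: step_a => A Sa; case: v_V => [[Pf _]|[_ staged_v]]; first by rewrite Pv in Pf.
  have [n stage_n] := dclosure_staged (staged_v a.1 Sa).
  by apply: (dead_stage_few_choice_paths (n := n)); rewrite (letterF A).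
case: step_a => A [Ra canon_a]; case: v_V => [[_ staged_v]|[Pt _]]; last by rewrite Pv in Pt.
have [g [Cg /dclosure_staged [n stage_n]]] := staged_v a.1 Ra.
apply: (dead_stage_few_choice_paths (n := n)); rewrite (letterT A) -canon_a -(canon_rep_eq Cg).
exact: canon_rep_stage.
Qed.

Variable choice_tails : seq (seq L).
Hypothesis choice_tailsP : forall a w,
  gen_step v canon_sel [::] a -> sorted canon_stepb (a :: w) -> choice_letter (last a w) ->
  w \in choice_tails.

Definition choice_window := [seq a :: w | a <- enum L, w <- choice_tails].

Lemma canon_choice_node b e :
  canon_config (rcons b (e, false)) -> choice_letter (e, false) -> rcons b (e, false) \in choice_window.
Proof.
case E: (rcons b (e, false)) => [|a w]; first by move: (congr1 size E); rewrite size_rcons.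
move=> /canon_config_cons [step_a path_w] choice_e.
apply/allpairsP; exists (a, w); split; rewrite ?mem_enum //; apply: (choice_tailsP step_a path_w).
have : last a w = last a (rcons b (e, false)) by rewrite E.
by rewrite last_rcons => ->.
Qed.

Definition canon_window :=
  [seq [:: a] | a <- enum L] ++ [seq rcons b a | b <- choice_window, a <- enum L].

(* Outside the window the next letter is forced: at an edge node that is not
   a choice node, every class other than that of the edge is a singleton. *)
Lemma gen_step_forced eta v' sel' b a :
  selects_reps v' sel' -> (forall w, eta w <-> generated v' sel' w) ->
  canon_config b -> eta b -> b != [::] -> b \notin choice_window ->
  (gen_step v canon_sel b a <-> gen_step v' sel' b a).
Proof.
move=> sel'_reps etaE canon_b eta_b.
case/lastP: b canon_b eta_b => [|b [e []]] // canon_b eta_b _ outside; rewrite !gen_step_rcons //=.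
have no_choice : ~ choice_letter (e, false).
  by move=> choice_e; move: outside; rewrite (canon_choice_node canon_b choice_e).
have gen_b : generated v' sel' (rcons b (e, false)) by apply/etaE.
split; case=> A [R [Ca sel_a]]; do 3 split=> //.
  have need_a : needs_rep v' (rcons b (e, false)) a.1 by rewrite needs_rep_rcons.
  have [g' [Cg' [sel_g' _]]] := sel'_reps _ _ gen_b need_a.
  suff -> : a.1 = g' by [].
  apply: contrapT => ne_g'; apply: no_choice; split=> //; exists a.1, g'; do 3 split=> //.
  by move=> E; apply: ne_g'; rewrite E.
apply: contrapT => not_canon; apply: no_choice; split=> //; exists a.1, (canon_rep a.1).
by do 3 split=> //; apply: canon_rep_cls.
Qed.

Lemma canon_config_isolated : isolated canon_config.
Proof.
exists canon_window => eta eta_config agr.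
have [v' [sel' [sel'_reps etaE]]] := config_is_generated eta_config.
suff E w : canon_config w <-> eta w by move=> w; rewrite E.
elim/last_ind: w => [|b a IH]; first by split=> _; [case: eta_config => _ []|constructor].
case: (eqVneq b [::]) => [->|ne_b].
  by symmetry; apply: agr; rewrite mem_cat; apply/orP; left; apply/mapP; exists a; rewrite ?mem_enum.
case: (boolP (b \in choice_window)) => [in_b|out_b].
  symmetry; apply: agr; rewrite mem_cat; apply/orP; right.
  by apply/allpairsP; exists (b, a); split; rewrite ?mem_enum.
rewrite /canon_config etaE !generated_rcons -etaE -/canon_config IH.
case: (pselect (eta b)) => eta_b; last by split; case.
have canon_b : canon_config b by apply/IH.
by rewrite (gen_step_forced a sel'_reps etaE canon_b eta_b ne_b out_b).
Qed.
End CanonicalConfig.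

Section Surjective.
Hypothesis src_onto : forall v : vtx G, part v = true -> exists e, src e = v.
Hypothesis rng_onto : forall v : vtx G, part v = false -> exists e, rng e = v.

Lemma Vset_isolated v :
  Vset (@dead_end G) v -> exists xi, config xi /\ config_v v xi /\ isolated xi.
Proof.
move=> v_V; have [|l tailsP] := @ex_uniform_cover_in _ _ (gen_step v canon_sel [::])
  (fun a w => sorted canon_stepb (a :: w) /\ choice_letter (last a w)).
  by move=> a /(root_few_choice_paths v_V) [l Rl]; exists l => w [path_w choice_w]; apply: Rl.
exists (canon_config v); split; first exact: canon_config_config.
split; last by apply: (@canon_config_isolated v l) => a w step_a path_w choice_w; apply: (tailsP a).

rewrite /config_v /canon_config; case Pv: (part v).
  by have [e Se] := src_onto Pv; exists e; split=> //; apply/generated1; rewrite gen_step_nil Pv.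
have [e Re] := rng_onto Pv; exists e; split=> //; exists (canon_rep e); split; first exact: canon_rep_cls.
apply/generated1; rewrite gen_step_nil Pv; do 2 split=> //; last exact: canon_rep_id.
by rewrite -Re; apply/cls_rng/canon_rep_cls.
Qed.

(** * When Omega(E,C) is a Cantor space *)

Lemma config_closed (xi : seq L -> Prop) :
  (forall F : seq (seq L), exists eta, config eta /\ forall w, w \in F -> (eta w <-> xi w)) ->
  config xi.
Proof.
move=> approx; split=> [w xi_w|].
  have [eta [eta_config agr]] := approx [:: w].
  by apply: (config_reduced eta_config); apply/(agr w); rewrite ?mem_head.
split.
  have [eta [eta_config agr]] := approx [:: [::]].
  by apply/(agr [::]); rewrite ?mem_head //; case: eta_config => _ [].
split=> [w k xi_w|al xi_al].
  have [eta [eta_config agr]] := approx [:: w; take k w].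
  apply/agr; first by rewrite !inE eqxx orbT.
  by apply: (config_take eta_config); apply/(agr w); rewrite ?mem_head.
have [eta [eta_config agr]] := approx (al :: [seq lmul a al | a <- enum L]).
have agr_a a : eta (lmul a al) <-> xi (lmul a al).
  by apply: agr; rewrite inE; apply/orP; right; apply/mapP; exists a; rewrite ?mem_enum.
have eta_al : eta al by apply/(agr al); rewrite ?mem_head.
case: eta_config => _ [_ [_ /(_ al eta_al)]] [[v [Pv out]]|[v [Pv [in_v reps]]]].
  by left; exists v; split=> // a; rewrite -agr_a.
right; exists v; split=> //; split; first by move=> a /agr_a; apply: in_v.
move=> e Re; have [g [[Cg eta_g] U]] := reps e Re; exists g; split; first by split=> //; apply/agr_a.
by move=> g' C' /agr_a; apply: U.
Qed.

Lemma config_in_some_v (xi : seq L -> Prop) : config xi -> exists v, config_v v xi.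
Proof.
move=> xi_config; have [v [[Pv xi1]|[Pv [_ reps]]]] := config_rooted xi_config; exists v; rewrite /config_v Pv.
  by have [e Se] := src_onto Pv; exists e; split=> //; apply/xi1.
have [e Re] := rng_onto Pv; exists e; split=> //.
by have [g [[Cg xi_g] _]] := reps e Re; exists g.
Qed.

Lemma config_perfect : (forall v, ~ Vset (@dead_end G) v) ->
  forall xi : seq L -> Prop, config xi -> forall F : seq (seq L), exists eta, config eta /\
    (forall w, w \in F -> (eta w <-> xi w)) /\ exists w, ~ (eta w <-> xi w).
Proof.
move=> no_V xi xi_config F; apply: contrapT => not_perfect.
have [v xi_v] := config_in_some_v xi_config.
apply: (no_V v); apply: (isolated_Vset xi_config xi_v); exists F => eta eta_config agr w.
apply: contrapT => ne_w; apply: not_perfect; exists eta; do 2 split=> //; by exists w.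
Qed.

Lemma cantor_no_Vset v : cantor_space (@config G) -> ~ Vset (@dead_end G) v.
Proof.
move=> [f [g [g_config [gf [fg [_ g_cont]]]]]].
move=> /Vset_isolated [xi [xi_config [_ [F xi_isolated]]]].
have [N g_cont_F] : exists N, forall t, t \in F ->
    forall y, (forall i, i < N -> y i = f xi i) -> (g y t <-> g (f xi) t).
  have [t n m le_nm cont_n y yx|t _|N cont_N] := @ex_uniform_bound _ F
      (fun t N => forall y, (forall i, i < N -> y i = f xi i) -> (g y t <-> g (f xi) t)).
  - by apply: cont_n => i lt_in; apply: yx; apply: leq_trans lt_in le_nm.
  - exact: g_cont.
  by exists N.
pose y i := if i == N then ~~ f xi N else f xi i.
have agr : agree F (g y) xi.
  move=> t tF; rewrite (g_cont_F t tF y) ?gf // => i lt_iN.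
  by rewrite /y; case: eqP => // E; rewrite E ltnn in lt_iN.
have gy_xi : g y = xi by apply/funext => w; apply/propext/xi_isolated.
by have := fg y N; rewrite gy_xi /y eqxx; case: (f xi N).
Qed.

Lemma no_Vset_cantor : 0 < #|vtx G| ->
  (forall v, ~ Vset (@dead_end G) v) -> cantor_space (@config G).
Proof.
move=> /card_gt0P [v _] no_V; apply: cantor_of_perfect.
- by move=> xi eta xi_eta; have -> : xi = eta by apply/funext => w; apply/propext.
- exact: config_closed.
- by exists (canon_config v); apply: canon_config_config.
- exact: config_perfect.
Qed.
End Surjective.
End Configurations.

Unset Implicit Arguments.

Theorem proposition9 (G : bsg)
  (Hs : forall v : vtx G, part v = true -> exists e, src e = v)
  (Hr : forall v : vtx G, part v = false -> exists e, rng e = v)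
  (Hv : 0 < #|vtx G|) :
  (forall v : vtx G,
     (exists xi, config xi /\ config_v v xi /\ isolated xi) <->
     Vset (@dead_end G) v) /\
  (cantor_space (@config G) <-> forall v : vtx G, ~ Vset (@dead_end G) v).
Proof.
split=> [v|]; first split.
- by case=> xi [xi_config [xi_v xi_isolated]]; apply: isolated_Vset xi_isolated.
- exact: Vset_isolated.
split; first by move=> cantor v; apply: cantor_no_Vset.
exact: no_Vset_cantor.
Qed.
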